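(* Let $A,B\subseteq\Sigma^+$ be such that either (1) there are $a\in A$ and $b_1,b_2\in B$ with $b_1\sqsubseteq a$ and $a\sqsubseteq b_2$, or (2) there are $a_1,a_2\in A$ and $b\in B$ with $a_1\sqsubseteq b$ and $b\sqsubseteq a_2$. Then in every deduction tree of $\langle A,B\rangle$, the rule applied at the root is neither Future nor Globally.
   Context: Let $AP$ be a finite set of atomic propositions and $\Sigma=2^{AP}$. For $\sigma=w_0\cdots w_m\in\Sigma^+$ and $j\le m$, $\sigma^{(j)}=w_j\cdots w_m$; $\sigma_1\sqsubseteq\sigma_2$ means $\sigma_1=\sigma_2^{(j)}$ for some position $j$ of $\sigma_2$ (i.e. $\sigma_1$ is a suffix of $\sigma_2$). For $A\subseteq\Sigma^+$: $A^{\mathsf X}=\{\sigma^{(1)}:\sigma\in A,|\sigma|\ge2\}$; $A^{\mathsf G}=\{\sigma^{(j)}:\sigma\in A,0\le j<|\sigma|\}$; a future point for $A$ is $f:A\to\mathbb N$ with $f(\sigma)<|\sigma|$, and $A^f=\{\sigma^{(f(\sigma))}:\sigma\in A\}$. For a literal $\alpha\in\{p,\neg p:p\in AP\}$, $A\models\alpha$ means $\alpha$ holds at position $0$ of every trace in $A$; $B\perp\alpha$ means it fails at position $0$ of every trace in $B$. Proof system on terms $\langle A,B\rangle$: Atomic: $\langle A,B\rangle$ if $A\models\alpha$, $B\perp\alpha$ for a literal $\alpha$; Or: $\langle A_1\uplus A_2,B\rangle$ from $\langle A_1,B\rangle,\langle A_2,B\rangle$; And: $\langle A,B_1\uplus B_2\rangle$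 from $\langle A,B_1\rangle,\langle A,B_2\rangle$; Next: $\langle A,B\rangle$ from $\langle A^{\mathsf X},B^{\mathsf X}\rangle$ if $|A^{\mathsf X}|=|A|$; WeakNext: $\langle A,B\rangle$ from $\langle A^{\mathsf X},B^{\mathsf X}\rangle$ if $|B^{\mathsf X}|=|B|$; Future: $\langle A,B\rangle$ from $\langle A^f,B^{\mathsf G}\rangle$, $f$ a future point for $A$; Globally: $\langle A,B\rangle$ from $\langle A^{\mathsf G},B^f\rangle$, $f$ a future point for $B$ ($\uplus$ = disjoint union). A deduction tree for $\langle A,B\rangle$ is a finite tree of rule applications rooted at $\langle A,B\rangle$ with all hypotheses derived. *)

From mathcomp Require Import all_boot.
From mathcomp Require Import finmap.
Set Implicit Arguments. Unset Strict Implicit. Unset Printing Implicit Defensive.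
Open Scope fset_scope.

Section LTL.
Variable AP : finType.

(* a letter of Sigma = 2^AP; a trace is a (nonempty, by hypothesis) word *)
Definition letter := {set AP}.
Definition trace := seq letter.

Definition suf (j : nat) (s : trace) : trace := drop j s.

Definition suffixeq (s1 s2 : trace) : Prop :=
  exists2 j, j < size s2 & s1 = suf j s2.

Definition nonempty_traces (A : {fset trace}) : Prop :=
  forall s, s \in A -> 0 < size s.

Definition setX (A : {fset trace}) : {fset trace} :=
  [fset suf 1 s | s in A & 1 < size s].

Definition setG (A : {fset trace}) : {fset trace} :=
  [fset t in flatten [seq [seq suf j s | j <- iota 0 (size s)] | s <- A]].

Definition future_point (A : {fset trace}) (f : trace -> nat) : Prop :=
  forall s, s \in A -> f s < size s.

Definition setF (A : {fset trace}) (f : trace -> nat) : {fset trace} :=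
  [fset suf (f s) s | s in A].

(* literal: p (if b = true) or ~p (if b = false) *)
Record literal := Lit { lit_var : AP; lit_pos : bool }.

Definition holds0 (a : literal) (s : trace) : bool :=
  if s is w :: _ then (lit_var a \in w) == lit_pos a else false.

Definition models (A : {fset trace}) (a : literal) : Prop :=
  forall s, s \in A -> holds0 a s.
Definition perp (B : {fset trace}) (a : literal) : Prop :=
  forall s, s \in B -> ~~ holds0 a s.

Inductive deriv : {fset trace} -> {fset trace} -> Type :=
| DAtomic A B (a : literal) : models A a -> perp B a -> deriv A B
| DOr A B A1 A2 : A = A1 `|` A2 -> [disjoint A1 & A2] ->
    deriv A1 B -> deriv A2 B -> deriv A B
| DAnd A B B1 B2 : B = B1 `|` B2 -> [disjoint B1 & B2] ->
    deriv A B1 -> deriv A B2 -> deriv A B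
| DNext A B : #|` setX A| = #|` A| -> deriv (setX A) (setX B) -> deriv A B
| DWeakNext A B : #|` setX B| = #|` B| -> deriv (setX A) (setX B) -> deriv A B
| DFuture A B (f : trace -> nat) : future_point A f ->
    deriv (setF A f) (setG B) -> deriv A B
| DGlobally A B (f : trace -> nat) : future_point B f ->
    deriv (setG A) (setF B f) -> deriv A B.

Inductive rule := RAtomic | ROr | RAnd | RNext | RWeakNext | RFuture | RGlobally.

Definition root_rule A B (d : deriv A B) : rule :=
  match d with
  | DAtomic _ _ _ _ _ => RAtomic
  | DOr _ _ _ _ _ _ _ _ => ROr
  | DAnd _ _ _ _ _ _ _ _ => RAnd
  | DNext _ _ _ _ => RNext
  | DWeakNext _ _ _ _ => RWeakNext
  | DFuture _ _ _ _ _ => RFuture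
  | DGlobally _ _ _ _ _ => RGlobally
  end.
End LTL.

(* A derivable term <A, B> always has A and B disjoint: Atomic separates A from
   B by a literal, Or/And split a side, Future/Globally map a common trace s to
   the common trace s^(f s), and under the cardinality side condition of
   Next/WeakNext every trace of the preserved side has length at least 2, so
   s^(1) is common to A^X and B^X.  Now if Future is applied at the root of a
   tree for <A, B> and a ⊑ b with a in A, b in B, then a^(f a) ⊑ a ⊑ b lies in
   both A^f and B^G; symmetrically for Globally when b ⊑ a. *)
From Pilot Require Import Defs.
From mathcomp Require Import all_boot.
From mathcomp Require Import finmap.
From mathcomp Require Import zify.
Open Scope fset_scope.

Section Disjointness.
Variable AP : finType.
Implicit Types (A B : {fset trace AP}) (a b s t u : trace AP) (f : trace AP -> nat).

Lemma suffixeq_suf {s j} : j < size s -> suffixeq (suf j s) s.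
Proof. by exists j. Qed.

Lemma suffixeq_trans {s t u} : suffixeq s t -> suffixeq t u -> suffixeq s u.
Proof.
move=> [i lt_i ->] [j lt_j def_t]; subst t; exists (i + j)%N.
  by move: lt_i; rewrite /suf size_drop; lia.
by rewrite /suf drop_drop addnC.
Qed.

Lemma mem_setG {B s t} : t \in B -> suffixeq s t -> s \in setG B.
Proof.
move=> tB [j lt_j ->]; rewrite in_fset; apply/flattenP.
exists [seq suf i t | i <- iota 0 (size t)]; first by apply/mapP; exists t.
by apply/mapP; exists j; rewrite // mem_iota.
Qed.

Lemma mem_setF {A} f {s} : s \in A -> suf (f s) s \in setF A f.
Proof. by move=> sA; apply/imfsetP; exists s. Qed.

Lemma card_setX_lt {A s} : s \in A -> size s <= 1 -> #|` Defs.setX A| < #|` A|.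
Proof.
move=> sA small_s.
have sub : Defs.setX A `<=` suf 1 @` (A `\ s).
  apply/fsubsetP => _ /imfsetP [t /= /andP [tA big_t] ->].
  apply/imfsetP; exists t => //=; rewrite in_fsetD1 tA andbT.
  by apply: contraTneq big_t => ->; rewrite -leqNgt.
apply: leq_ltn_trans (fsubset_leq_card sub) _.
apply: leq_ltn_trans (leq_imfset_card _ _ _) _.
by rewrite [X in _ < X](cardfsD1 s) sA.
Qed.

Lemma mem_setX {A s} : s \in A -> 1 < size s -> suf 1 s \in Defs.setX A.
Proof. by move=> sA big_s; apply/imfsetP; exists s; rewrite //= inE sA. Qed.

Lemma card_setX_size {A s} : #|` Defs.setX A| = #|` A| -> s \in A -> 1 < size s.
Proof.
move=> cardX sA; rewrite ltnNge; apply/negP.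
by move=> /(card_setX_lt sA); rewrite cardX ltnn.
Qed.

Lemma deriv_disjoint {A B} (d : deriv A B) {s} : s \in A -> s \in B -> False.
Proof.
elim: d s => {A B}.
- by move=> A B a modA perpB s sA /perpB; rewrite modA.
- move=> A B A1 A2 -> _ _ IH1 _ IH2 s.
  by rewrite in_fsetU => /orP [/IH1 | /IH2].
- move=> A B B1 B2 -> _ _ IH1 _ IH2 s sA.
  by rewrite in_fsetU => /orP [/(IH1 _ sA) | /(IH2 _ sA)].
- move=> A B cardX _ IH s sA sB.
  have big_s := card_setX_size cardX sA.
  by apply: (IH (suf 1 s)); apply: mem_setX.
- move=> A B cardX _ IH s sA sB.
  have big_s := card_setX_size cardX sB.
  by apply: (IH (suf 1 s)); apply: mem_setX.
- move=> A B f fA _ IH s sA sB.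
  by apply: (IH (suf (f s) s)); [exact: mem_setF | exact: mem_setG sB (suffixeq_suf (fA s sA))].
- move=> A B f fB _ IH s sA sB.
  by apply: (IH (suf (f s) s)); [exact: mem_setG sA (suffixeq_suf (fB s sB)) | exact: mem_setF].
Qed.

Lemma root_rule_future A B (d : deriv A B) a b :
  a \in A -> b \in B -> suffixeq a b -> root_rule d <> RFuture.
Proof.
move=> + + ab; case: A B / d => //= A B f fA d aA bB _.
apply: (deriv_disjoint d (mem_setF f aA)).
exact: mem_setG bB (suffixeq_trans (suffixeq_suf (fA a aA)) ab).
Qed.

Lemma root_rule_globally A B (d : deriv A B) a b :
  a \in A -> b \in B -> suffixeq b a -> root_rule d <> RGlobally.
Proof.
move=> + + ba; case: A B / d => //= A B f fB d aA bB _.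
apply: (deriv_disjoint d _ (mem_setF f bB)).
exact: mem_setG aA (suffixeq_trans (suffixeq_suf (fB b bB)) ba).
Qed.

End Disjointness.

Theorem lemma12 (AP : finType) (A B : {fset trace AP}) :
  nonempty_traces A -> nonempty_traces B ->
  ((exists a b1 b2, [/\ a \in A, b1 \in B, b2 \in B,
       suffixeq b1 a & suffixeq a b2]) \/
   (exists a1 a2 b, [/\ a1 \in A, a2 \in A, b \in B,
       suffixeq a1 b & suffixeq b a2])) ->
  forall d : deriv A B, root_rule d <> RFuture /\ root_rule d <> RGlobally.
Proof.
(* The traces need not be nonempty for this argument. *)
move=> _ _ [[a [b1 [b2 [aA b1B b2B b1a ab2]]]] | [a1 [a2 [b [a1A a2A bB a1b ba2]]]]] d.
  by split; [apply: root_rule_future aA b2B ab2 | apply: root_rule_globally aA b1B b1a].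
by split; [apply: root_rule_future a1A bB a1b | apply: root_rule_globally a2A bB ba2].
Qed.
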